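(* For all $0<b<B$ there exists an instance $\langle A,f,c\rangle$ with $f$ XOS and $p(\{i\})\le b$ for all $i\in A$ such that $$\frac{\textsc{Max-Reward}(B)}{\textsc{Max-Reward}(b)}\ge\frac52.$$
   Context: An instance $\langle A,f,c\rangle$ consists of a finite set $A$ of agents, a monotone nondecreasing $f:2^A\to[0,1]$, and costs $c_i\ge0$. For $S\subseteq A$, $i\in S$: $f_S(i)=f(S)-f(S\setminus\{i\})$; $p(S)=\sum_{i\in S}c_i/f_S(i)$ (conventions: $0$ if $c_i=0=f_S(i)$, $\infty$ if $c_i>0=f_S(i)$). $f$ is XOS if it is the pointwise maximum of finitely many nonnegative additive set functions. $\textsc{Max-Reward}(B)=\max\{f(S):S\subseteq A,\ p(S)\le B\}$. *)

From HB Require Import structures.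
From mathcomp Require Import all_boot all_order all_algebra.
From mathcomp Require Import reals constructive_ereal.
Set Implicit Arguments. Unset Strict Implicit. Unset Printing Implicit Defensive.
Import Order.TTheory GRing.Theory Num.Theory.
Local Open Scope ring_scope.

Section Defs.
Variables (R : realType) (n : nat).
Variables (f : {set 'I_n} -> R) (c : 'I_n -> R).

Definition fmarg (S : {set 'I_n}) (i : 'I_n) : R := f S - f (S :\ i).

Definition pterm (S : {set 'I_n}) (i : 'I_n) : \bar R :=
  if fmarg S i == 0 then (if c i == 0 then 0%E else +oo%E)
  else (c i / fmarg S i)%:E.

Definition price (S : {set 'I_n}) : \bar R := (\sum_(i in S) pterm S i)%E.

Definition is_instance : Prop :=
  (forall S T : {set 'I_n}, S \subset T -> f S <= f T) /\
  (forall S : {set 'I_n}, 0 <= f S <= 1) /\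
  (forall i, 0 <= c i).

Definition XOS : Prop :=
  exists (k : nat) (w : 'I_k.+1 -> 'I_n -> R),
    (forall j i, 0 <= w j i) /\
    (forall S : {set 'I_n}, (forall j, \sum_(i in S) w j i <= f S) /\
               exists j, f S = \sum_(i in S) w j i).

(* Max-Reward(B) = max { f(S) : p(S) <= B }.  The empty set is always
   feasible for B >= 0 and f >= 0, so the default 0 is harmless. *)
Definition MaxReward (B : R) : R :=
  \big[Num.max/0]_(S : {set 'I_n} | (price S <= B%:E)%E) f S.
End Defs.

(* Four agents, reward f = (1/6) max(w0, w1, w2) for the additive weights
   w0 = (1,1,1,0), w1 = (1,2,1,2), w2 = (2,0,0,0), and costs λ/6 (0,2,1,2)
   with λ <= b < 2λ <= B.  Agent 0 is free and alone earns 1/3.  Every set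
   earning more than 1/3 pays at least 2λ > b, so Max-Reward(b) = 1/3, while
   {0,1,3} earns 5/6 at price exactly 2λ <= B. *)
From mathcomp Require Import all_boot all_order all_algebra.
From mathcomp Require Import reals constructive_ereal.
From mathcomp Require Import ring lra.
Import Order.TTheory GRing.Theory Num.Theory.
Set Implicit Arguments. Unset Strict Implicit.
Local Open Scope ring_scope.

Section MaxOfAdditive.
Variables (R : realType) (n k : nat) (w : 'I_k.+1 -> 'I_n -> R).
Hypothesis w_ge0 : forall j i, 0 <= w j i.

Definition max_additive (S : {set 'I_n}) : R :=
  \big[Num.max/0]_j \sum_(i in S) w j i.

Lemma max_additive_XOS : XOS max_additive.
Proof.
exists k, w; split=> // S; split=> [j|]; first exact: le_bigmax.
have sum_ge0 j : 0 <= \sum_(i in S) w j i by exact: sumr_ge0.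
have [j _ max_j] :=
  Order.TotalTheory.eq_bigmax ord0 predT _ isT (fun j _ => sum_ge0 j).
by exists j; rewrite /max_additive -max_j.
Qed.

Lemma max_additive_mono (S T : {set 'I_n}) :
  S \subset T -> max_additive S <= max_additive T.
Proof.
move=> ST; apply: le_bigmax2 => j _.
by rewrite [leRHS](big_setID S) /= (setIidPr ST) lerDl sumr_ge0.
Qed.
End MaxOfAdditive.

Section PriceAndMaxReward.
Variables (R : realType) (n : nat).

Lemma price_scale (f g : {set 'I_n} -> R) (c d : 'I_n -> R) (a : R) :
  a != 0 -> (forall S, g S = a * f S) -> (forall i, d i = a * c i) ->
  price g d =1 price f c.
Proof.
move=> a0 gE dE S; apply: eq_bigr => i _.
have margE : fmarg g S i = a * fmarg f S i by rewrite /fmarg !gE mulrBr.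
rewrite /pterm margE dE !mulf_eq0 (negbTE a0) /=.
by case: eqP => // /eqP m0; congr (_%:E); field; rewrite m0.
Qed.

Lemma pterm_natr (h : {set 'I_n} -> nat) (c : 'I_n -> R) S i :
  (h (S :\ i) <= h S)%N ->
  pterm (fun S => (h S)%:R) c S i =
    if (h S - h (S :\ i) == 0)%N then (if c i == 0 then 0%E else +oo%E)
    else (c i / (h S - h (S :\ i))%:R)%:E.
Proof. by move=> le_h; rewrite /pterm /fmarg -natrB // pnatr_eq0. Qed.

Variables (f : {set 'I_n} -> R) (c : 'I_n -> R).

Lemma le_MaxReward (B : R) S : (price f c S <= B%:E)%E -> f S <= MaxReward f c B.
Proof. exact: le_bigmax_cond. Qed.

Lemma MaxReward_le (B v : R) : 0 <= v ->
  (forall S, (price f c S <= B%:E)%E -> f S <= v) -> MaxReward f c B <= v.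
Proof. exact: bigmax_le. Qed.
End PriceAndMaxReward.

Definition o0 : 'I_4 := @Ordinal 4 0 isT.
Definition o1 : 'I_4 := @Ordinal 4 1 isT.
Definition o2 : 'I_4 := @Ordinal 4 2 isT.
Definition o3 : 'I_4 := @Ordinal 4 3 isT.

Lemma big_set4 (T : Type) (idx : T) (op : Monoid.law idx) (F : 'I_4 -> T)
    (S : {set 'I_4}) :
  \big[op/idx]_(i in S) F i =
  op (op (op (if o0 \in S then F o0 else idx) (if o1 \in S then F o1 else idx))
         (if o2 \in S then F o2 else idx))
     (if o3 \in S then F o3 else idx).
Proof.
rewrite big_mkcond !big_ord_recr big_ord0 Monoid.mul1m /=.
congr (op (op (op _ _) _) _); congr (if _ \in S then F _ else _).
all: exact/val_inj.
Qed.

Definition weight (j : 'I_3) (i : 'I_4) : nat :=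
  nth 0 (nth [::] [:: [:: 1; 1; 1; 0]; [:: 1; 2; 1; 2]; [:: 2; 0; 0; 0]] j) i.

Definition units (i : 'I_4) : nat := nth 0 [:: 0; 2; 1; 2] i.

Definition value (S : {set 'I_4}) : nat := \max_(j < 3) \sum_(i in S) weight j i.

Lemma valueE (S : {set 'I_4}) :
  let x (i : 'I_4) := nat_of_bool (i \in S) in
  value S =
  maxn (maxn (x o0 + x o1 + x o2) (x o0 + 2 * x o1 + x o2 + 2 * x o3)) (2 * x o0).
Proof.
rewrite /value !big_ord_recr big_ord0 !big_set4 /=.
by case: (o0 \in S); case: (o1 \in S); case: (o2 \in S); case: (o3 \in S).
Qed.

Section Instance.
Variable R : realType.

Definition reward (S : {set 'I_4}) : R :=
  max_additive (fun j i => (weight j i)%:R / 6) S.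

Definition cost (lam : R) (i : 'I_4) : R := lam / 6 * (units i)%:R.

Lemma rewardE (S : {set 'I_4}) : reward S = (value S)%:R / 6.
Proof.
have natr_div6_max :
    {morph (fun m : nat => m%:R / 6 : R) : x y / maxn x y >-> Num.max x y}.
  by move=> x y /=; rewrite -maxEnat natr_max maxr_pMl ?invr_ge0.
rewrite /reward /max_additive /value.
rewrite (big_morph _ natr_div6_max (mul0r 6^-1 : 0%:R / 6 = 0 :> R)).
by apply: eq_bigr => j _; rewrite natr_sum mulr_suml.
Qed.

Lemma reward_XOS : XOS reward.
Proof. by apply: max_additive_XOS => j i; rewrite divr_ge0. Qed.

Lemma reward_mono (S T : {set 'I_4}) : S \subset T -> reward S <= reward T.
Proof. by apply: max_additive_mono => j i; rewrite divr_ge0. Qed.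

Lemma value_mono (S T : {set 'I_4}) : S \subset T -> (value S <= value T)%N.
Proof.
move=> ST; rewrite -(ler_nat R) -(ler_pM2r (_ : 0 < 6^-1 :> R)) ?invr_gt0 //.
by rewrite -!rewardE reward_mono.
Qed.

Lemma reward_bounds (S : {set 'I_4}) : 0 <= reward S <= 1.
Proof.
have value_le6 : (value S <= 6)%N.
  by rewrite (leq_trans (value_mono (subsetT S))) // valueE !inE.
rewrite rewardE divr_ge0 //= ler_pdivrMr // mul1r ler_nat.
exact: value_le6.
Qed.

Lemma priceE lam (S : {set 'I_4}) : 0 < lam ->
  price reward (cost lam) S =
  (\sum_(i in S)
     if (value S - value (S :\ i) == 0)%N then (if units i == 0%N then 0 else +oo)
     else (lam * (units i)%:R / (value S - value (S :\ i))%:R)%R%:E)%E.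
Proof.
move=> lam0.
have -> : price reward (cost lam) S =
          price (fun S => (value S)%:R) (fun i => lam * (units i)%:R) S.
  apply: (price_scale (a := 6^-1)) => [|T|i]; first by rewrite invr_eq0 pnatr_eq0.
    by rewrite rewardE mulrC.
  by rewrite /cost mulrAC mulrC mulrA.
apply: eq_bigr => i _.
by rewrite pterm_natr ?value_mono ?subD1set // mulf_eq0 pnatr_eq0 (gt_eqF lam0).
Qed.

(* ssrnat's arithmetic is [simpl never]; switching to the Init functions lets
   [/=] evaluate the marginal values of a concrete set. *)
Ltac eval_price :=
  rewrite /units; change addn with Nat.add; change subn with Nat.sub;
  change muln with Nat.mul; rewrite /= ?add0e ?adde0 -?EFinD ?lee_fin.

Lemma value_le2_of_affordable lam b (S : {set 'I_4}) : 0 < lam -> b < 2 * lam ->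
  (price reward (cost lam) S <= b%:E)%E -> (value S <= 2)%N.
Proof.
move=> lam0 b_lt; rewrite priceE // big_set4 !valueE !in_setD1 /=.
case: (o0 \in S); case: (o1 \in S); case: (o2 \in S); case: (o3 \in S);
  eval_price.
all: first [by [] | move=> ?; lra | by rewrite addey // leye_eq].
Qed.

Lemma price_singleton lam (i : 'I_4) : 0 < lam ->
  (price reward (cost lam) [set i] <= lam%:E)%E.
Proof.
move=> lam0; rewrite priceE // big_set4 !valueE !in_setD1 !inE.
by case: i => [[|[|[|[|//]]]] ?]; eval_price; lra.
Qed.

Lemma price_o0_o1_o3 lam : 0 < lam ->
  price reward (cost lam) [set o0; o1; o3] = (2 * lam)%:E.
Proof.
move=> lam0; rewrite priceE // big_set4 !valueE !in_setD1 !inE.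
by eval_price; congr (_%:E); lra.
Qed.

Lemma reward_o0 : reward [set o0] = 1 / 3.
Proof. by rewrite rewardE (_ : value _ = 2%N) ?valueE ?inE //; lra. Qed.

Lemma reward_o0_o1_o3 : reward [set o0; o1; o3] = 5 / 6.
Proof. by rewrite rewardE (_ : value _ = 5%N) // valueE !inE. Qed.
End Instance.

Theorem mainTheorem14 (R : realType) (b B : R) :
  0 < b -> b < B ->
  exists (n : nat) (f : {set 'I_n} -> R) (c : 'I_n -> R),
    is_instance f c /\ XOS f /\
    (forall i : 'I_n, (price f c [set i] <= b%:E)%E) /\
    0 < MaxReward f c b /\
    5 / 2 <= MaxReward f c B / MaxReward f c b.
Proof.
move=> b_gt0 b_lt_B.
have [lam [lam_gt0 [lam_le_b [b_lt_2lam two_lam_le_B]]]] :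
    exists lam : R, 0 < lam /\ lam <= b /\ b < 2 * lam /\ 2 * lam <= B.
  by case: (lerP (2 * b) B) => h; [exists b | exists (B / 2)]; lra.
have max_b : MaxReward (@reward R) (cost lam) b = 1 / 3.
  apply/eqP; rewrite eq_le; apply/andP; split.
    apply: MaxReward_le => [|S /(value_le2_of_affordable lam_gt0 b_lt_2lam)].
      lra.
    by rewrite -(ler_nat R) rewardE => ?; lra.
  rewrite -reward_o0; apply: le_MaxReward.
  by rewrite (le_trans (price_singleton _ lam_gt0)) // lee_fin.
have max_B : 5 / 6 <= MaxReward (@reward R) (cost lam) B.
  by rewrite -reward_o0_o1_o3 le_MaxReward // price_o0_o1_o3 // lee_fin.
exists 4, (@reward R), (cost lam); split; [|split; [|split; [|split]]].
- split; [exact: reward_mono | split; [exact: reward_bounds |]].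
  by move=> i; rewrite /cost mulr_ge0 ?divr_ge0 ?ler0n ?ltW.
- exact: reward_XOS.
- by move=> i; rewrite (le_trans (price_singleton i lam_gt0)) // lee_fin.
- rewrite max_b; lra.
- by rewrite max_b ler_pdivlMr //; lra.
Qed.
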